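(* Let $\mathfrak{o}$ be a compact discrete valuation ring with uniformizer $\pi$, maximal ideal $\mathfrak{p}$ and residue field $\mathbb{F}_q$, let $\mathfrak{o}_r=\mathfrak{o}/\mathfrak{p}^r$, $\mathfrak{g}=\mathfrak{sl}_n(\mathfrak{o})$ and $\mathfrak{g}_r=\mathfrak{sl}_n(\mathfrak{o}_r)$. Let $\kappa$ be the symmetric invariant $\mathfrak{o}$-bilinear form on $\mathfrak{g}$ fixed in the paper, assumed non-degenerate modulo $\mathfrak{p}$, and let $\kappa_1$ be the induced $\mathbb{F}_q$-bilinear form on $\mathfrak{g}_1=\mathfrak{sl}_n(\mathbb{F}_q)$. Let $r\in\mathbb{N}$, $e\in\mathfrak{g}_r$, let $b\in\mathfrak{g}_{r+1}$ be a shadow-preserving lift of $e$, let $x_c\in\mathfrak{g}_{r+1}$ with reduction $\bar{x}_c\in\mathfrak{g}_1$, and put $x=b+\pi^rx_c\in\mathfrak{g}_{r+1}$. Let $c$ be the linear functional $z\mapsto\kappa_1(\bar{x}_c,z)$ on $\mathrm{sh}_{\mathfrak{g}_r}(e)$, and let $$\mathrm{stab}_{\mathrm{sh}_{\mathfrak{g}_r}(e)}(c)=\{y\in\mathrm{sh}_{\mathfrak{g}_r}(e) : c([y,z])=0\ \text{for all } z\in\mathrm{sh}_{\mathfrak{g}_r}(e)\}.$$ Then $\mathrm{stab}_{\mathrm{sh}_{\mathfrak{g}_r}(e)}(c)=\mathrm{sh}_{\mathfrak{g}_{r+1}}(x)$.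
   Context: Lie shadow: for $a\in\mathfrak{g}_r$, $\mathrm{sh}_{\mathfrak{g}_r}(a)$ is the image in $\mathfrak{g}_1$ of the centralizer $C_{\mathfrak{g}_r}(a)$ under reduction modulo $\mathfrak{p}$. A lift $b\in\mathfrak{g}_{r+1}$ of $e\in\mathfrak{g}_r$ (i.e. $b$ reduces to $e$ modulo $\mathfrak{p}^r$) is shadow-preserving if $\mathrm{sh}_{\mathfrak{g}_{r+1}}(b)=\mathrm{sh}_{\mathfrak{g}_r}(e)$. *)

From HB Require Import structures.
From mathcomp Require Import all_boot all_order all_algebra.
Set Implicit Arguments. Unset Strict Implicit. Unset Printing Implicit Defensive.
Import GRing.Theory.
Local Open Scope ring_scope.

Definition pdvd (o : comRingType) (d a : o) : Prop := exists c : o, a = c * d.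

Definition mxcong (o : comRingType) (n : nat) (d : o) (A B : 'M[o]_n) : Prop :=
  forall i j, pdvd d ((A - B) i j).

Definition is_DVR_unif (o : idomainType) (pi : o) : Prop :=
  [/\ pi != 0, pi \notin GRing.unit &
      forall a : o, a != 0 -> exists u : o, exists k : nat,
        u \is a GRing.unit /\ a = u * pi ^+ k].

(* Compactness of a DVR (for the pi-adic topology) = finite residue field +
   completeness (every pi-adically Cauchy sequence converges). *)
Definition compact_DVR (o : idomainType) (pi : o) : Prop :=
  (exists s : seq o, forall a : o, exists2 t, t \in s & pdvd pi (a - t)) /\
  (forall f : nat -> o, (forall k, pdvd (pi ^+ k) (f k.+1 - f k)) ->
     exists l : o, forall k, pdvd (pi ^+ k) (l - f k)).

(* Elements of g_r = sl_n(o/p^r) are represented by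
   elements of sl_n(o) (the reduction map is surjective), up to congruence mod pi^r;
   elements of g_1 are represented by matrices up to congruence mod pi. *)
Definition in_sl (o : comRingType) (n : nat) (A : 'M[o]_n) : Prop := \tr A = 0.

Definition lie (o : comRingType) (n : nat) (A B : 'M[o]_n) : 'M[o]_n :=
  A *m B - B *m A.

Definition centr (o : comRingType) (n : nat) (pi : o) (r : nat) (a y : 'M[o]_n)
  : Prop := in_sl y /\ mxcong (pi ^+ r) (lie a y) 0.

(* Lie shadow sh_{g_r}(a): image of C_{g_r}(a) in g_1 under reduction mod p;
   z (a representative of an element of g_1) lies in it iff it is congruent
   mod pi to some element of the centralizer. *)
Definition shadow (o : comRingType) (n : nat) (pi : o) (r : nat) (a z : 'M[o]_n)
  : Prop := exists y, centr pi r a y /\ mxcong pi z y.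

Definition good_form (o : comRingType) (n : nat) (pi : o)
    (kappa : 'M[o]_n -> 'M[o]_n -> o) : Prop :=
  [/\ (forall (a : o) x y z, in_sl x -> in_sl y -> in_sl z ->
         kappa (a *: x + y) z = a * kappa x z + kappa y z),
      (forall (a : o) x y z, in_sl x -> in_sl y -> in_sl z ->
         kappa x (a *: y + z) = a * kappa x y + kappa x z),
      (forall x y, in_sl x -> in_sl y -> kappa x y = kappa y x),
      (forall x y z, in_sl x -> in_sl y -> in_sl z ->
         kappa (lie x y) z = kappa x (lie y z)) &
      (forall x, in_sl x -> (forall y, in_sl y -> pdvd pi (kappa x y)) ->
         forall i j, pdvd pi (x i j))].

Definition stab_sh (o : comRingType) (n : nat) (pi : o)
    (kappa : 'M[o]_n -> 'M[o]_n -> o) (r : nat) (e xc y : 'M[o]_n) : Prop :=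
  shadow pi r e y /\
  forall z, shadow pi r e z -> pdvd pi (kappa xc (lie y z)).

From HB Require Import structures.
From mathcomp Require Import all_boot all_order all_algebra perm.
Set Implicit Arguments. Unset Strict Implicit. Unset Printing Implicit Defensive.
Import GRing.Theory.
Local Open Scope ring_scope.

(* The inclusion sh(x) <= stab(c) is a direct computation: for Y in the
   centralizer of x = b + pi^r x_c and Z in that of b (shadow preservation),
   pi^r kappa(x_c, [Y, Z]) = kappa([x, Y], Z) + kappa(Y, [b, Z]) = 0 mod p^(r+1).
   Conversely, ad x is skew for kappa, so by the Smith normal form over the DVR
   the shadow of ker(ad x mod p^(r+1)) is the kappa-orthogonal, mod p, of the
   W with pi^r W in the image of ad x mod p^(r+1).  Writing pi^r W = [x, V]
   and [b, V] = pi^r D gives W = D + [x_c, V] mod p; the stabilizer condition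
   kills the second term and invariance of kappa the first. *)

Section Divisibility.
Variable R : comNzRingType.
Implicit Types d a b c : R.

Lemma pdvd0 d : pdvd d 0.
Proof. by exists 0; rewrite mul0r. Qed.

Lemma pdvdnn d : pdvd d d.
Proof. by exists 1; rewrite mul1r. Qed.

Lemma pdvd_mull d a b : pdvd d b -> pdvd d (a * b).
Proof. by case=> c ->; exists (a * c); rewrite mulrA. Qed.

Lemma pdvd_mulr d a b : pdvd d a -> pdvd d (a * b).
Proof. by rewrite mulrC; apply: pdvd_mull. Qed.

Lemma pdvdD d a b : pdvd d a -> pdvd d b -> pdvd d (a + b).
Proof. by case=> c -> [c' ->]; exists (c + c'); rewrite mulrDl. Qed.

Lemma pdvdN d a : pdvd d a -> pdvd d (- a).
Proof. by case=> c ->; exists (- c); rewrite mulNr. Qed.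

Lemma pdvdB d a b : pdvd d a -> pdvd d b -> pdvd d (a - b).
Proof. by move=> da db; apply/pdvdD/pdvdN. Qed.

Lemma pdvd_trans d a b : pdvd d a -> pdvd a b -> pdvd d b.
Proof. by case=> c -> [c' ->]; exists (c' * c); rewrite mulrA. Qed.

Lemma pdvd_exp2l (p : R) k m : (k <= m)%N -> pdvd (p ^+ k) (p ^+ m).
Proof. by move=> le_km; exists (p ^+ (m - k)); rewrite -exprD subnK. Qed.

Lemma pdvd_subK d a b : pdvd d (a - b) -> pdvd d b -> pdvd d a.
Proof. by move=> dab db; rewrite -(subrK b a); apply: pdvdD. Qed.

Lemma pdvd_sum d (I : finType) (F : I -> R) :
  (forall i, pdvd d (F i)) -> pdvd d (\sum_i F i).
Proof. by move=> dF; elim/big_rec: _ => [|i x _]; [apply: pdvd0 | apply: pdvdD]. Qed.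

End Divisibility.

Lemma pdvd1_unit (R : comUnitRingType) (d : R) : pdvd d 1 -> d \is a GRing.unit.
Proof. by case=> c c_d; apply/unitrP; exists c; rewrite [d * c]mulrC -c_d. Qed.

Lemma pdvd_pmul2l (R : idomainType) (c d a : R) :
  c != 0 -> pdvd (c * d) (c * a) <-> pdvd d a.
Proof.
move=> c0; split=> [[k]|[k ->]]; last by exists k; rewrite mulrCA.
by rewrite mulrCA => /(mulfI c0) ->; exists k.
Qed.

Definition mxdvd (R : comNzRingType) m n (d : R) (A : 'M[R]_(m, n)) : Prop :=
  forall i j, pdvd d (A i j).

Section MatrixDivisibility.
Variable R : comNzRingType.
Implicit Types d a : R.

Lemma mxdvd0 d m n : mxdvd d (0 : 'M[R]_(m, n)).
Proof. by move=> i j; rewrite mxE; apply: pdvd0. Qed.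

Lemma mxdvdD d m n (A B : 'M[R]_(m, n)) : mxdvd d A -> mxdvd d B -> mxdvd d (A + B).
Proof. by move=> dA dB i j; rewrite mxE; apply: pdvdD. Qed.

Lemma mxdvdN d m n (A : 'M[R]_(m, n)) : mxdvd d A -> mxdvd d (- A).
Proof. by move=> dA i j; rewrite mxE; apply: pdvdN. Qed.

Lemma mxdvdB d m n (A B : 'M[R]_(m, n)) : mxdvd d A -> mxdvd d B -> mxdvd d (A - B).
Proof. by move=> dA dB; apply/mxdvdD/mxdvdN. Qed.

Lemma mxdvdZl d a m n (A : 'M[R]_(m, n)) : pdvd d a -> mxdvd d (a *: A).
Proof. by move=> da i j; rewrite mxE; apply: pdvd_mulr. Qed.

Lemma mxdvd_scale d m n (A : 'M[R]_(m, n)) : mxdvd d (d *: A).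
Proof. exact/mxdvdZl/pdvdnn. Qed.

Lemma mxdvdMl d m n p (A : 'M[R]_(m, n)) (B : 'M[R]_(n, p)) :
  mxdvd d B -> mxdvd d (A *m B).
Proof. by move=> dB i j; rewrite mxE; apply: pdvd_sum => k; apply: pdvd_mull. Qed.

Lemma mxdvdMr d m n p (A : 'M[R]_(m, n)) (B : 'M[R]_(n, p)) :
  mxdvd d A -> mxdvd d (A *m B).
Proof. by move=> dA i j; rewrite mxE; apply: pdvd_sum => k; apply: pdvd_mulr. Qed.

Lemma mxdvd_trans d e m n (A : 'M[R]_(m, n)) : pdvd d e -> mxdvd e A -> mxdvd d A.
Proof. by move=> de dA i j; apply: pdvd_trans de _. Qed.

Lemma mxdvd_tr d n (A : 'M[R]_n) : mxdvd d A -> pdvd d (\tr A).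
Proof. by move=> dA; apply: pdvd_sum => i; apply: dA. Qed.

Lemma mxdvdP d m n (A : 'M[R]_(m, n)) : mxdvd d A <-> exists D, A = d *: D.
Proof.
split=> [dA|[D ->]]; last exact: mxdvd_scale.
have [D dD] := fin_all_exists (fun ij : 'I_m * 'I_n => dA ij.1 ij.2).
by exists (\matrix_(i, j) D (i, j)); apply/matrixP => i j; rewrite !mxE mulrC (dD (i, j)).
Qed.

Lemma mxdvd_mxvec d m n (A : 'M[R]_(m, n)) : mxdvd d (mxvec A) <-> mxdvd d A.
Proof.
split=> [dA i j|dA i k]; first by have := dA 0 (mxvec_index i j); rewrite mxvecE.
by rewrite [i]ord1; case/mxvec_indexP: k => i' j'; rewrite mxvecE.
Qed.

End MatrixDivisibility.

Lemma mxdvd_pmul2l (R : idomainType) (c d : R) m n (A : 'M[R]_(m, n)) :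
  c != 0 -> mxdvd (c * d) (c *: A) <-> mxdvd d A.
Proof.
move=> c0; have E i j : (c *: A) i j = c * A i j by rewrite mxE.
by split=> dA i j;
  [apply/(pdvd_pmul2l _ _ c0); rewrite -E | rewrite E; apply/(pdvd_pmul2l _ _ c0)].
Qed.

Lemma mxcong0 (R : comNzRingType) n (d : R) (A : 'M[R]_n) : mxcong d A 0 <-> mxdvd d A.
Proof. by rewrite /mxcong subr0. Qed.

Lemma pivot_block (R : comUnitRingType) N (A : 'M[R]_(1 + N)) :
  (forall i j, pdvd (A 0 0) (A i j)) ->
  exists L U (A' : 'M[R]_N), [/\ L \in unitmx, U \in unitmx &
    A = L *m block_mx (A 0 0)%:M 0 0 A' *m U].
Proof.
move=> dA; pose a : 'M[R]_1 := (A 0 0)%:M.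
have [c Ec] := fin_all_exists (fun k : 'I_N => dA (rshift 1 k) 0).
have [w Ew] := fin_all_exists (fun k : 'I_N => dA 0 (rshift 1 k)).
pose C : 'M[R]_(N, 1) := \col_k c k; pose W : 'M[R]_(1, N) := \row_k w k.
have Eul : ulsubmx A = a by rewrite [ulsubmx A]mx11_scalar !mxE lshift0.
have Edl : dlsubmx A = C *m a.
  by apply/matrixP => k l; rewrite mul_mx_scalar !mxE ord1 lshift0 Ec mulrC.
have Eur : ursubmx A = a *m W.
  by apply/matrixP => k l; rewrite mul_scalar_mx !mxE ord1 lshift0 Ew mulrC.
exists (block_mx 1 0 C 1), (block_mx 1 W 0 1), (drsubmx A - C *m ursubmx A).
split; first by rewrite unitmxE det_lblock !det1 mulr1 unitr1.
  by rewrite unitmxE det_ublock !det1 mulr1 unitr1.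
rewrite !mulmx_block !mul1mx !mul0mx !mulmx0 !mulmx1 !addr0 !add0r.
by rewrite -/a Eur mulmxA addrC subrK -Eur -Edl -Eul submxK.
Qed.

Section DiscreteValuationRing.
Variables (R : idomainType) (pi : R).
Hypothesis pi_unif : is_DVR_unif pi.
Implicit Types a b d : R.

Lemma pdvd_total a b : pdvd a b \/ pdvd b a.
Proof.
have [_ _ factor] := pi_unif.
have [->|a0] := eqVneq a 0; first by right; apply: pdvd0.
have [->|b0] := eqVneq b 0; first by left; apply: pdvd0.
have [u [k [uu ->]]] := factor a a0; have [v [m [vu ->]]] := factor b b0.
have [le_km|/ltnW le_mk] := leqP k m.
  by left; exists (v / u * pi ^+ (m - k)); rewrite mulrACA divrK // -exprD subnK.
by right; exists (u / v * pi ^+ (k - m)); rewrite mulrACA divrK // -exprD subnK.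
Qed.

Lemma pdvd_exp_or_exp_pdvd d r : pdvd d (pi ^+ r) \/ pdvd (pi ^+ r.+1) d.
Proof.
have [_ _ factor] := pi_unif.
have [->|d0] := eqVneq d 0; first by right; apply: pdvd0.
have [u [k [uu ->]]] := factor d d0.
have [le_kr|lt_rk] := leqP k r.
  by left; exists (u^-1 * pi ^+ (r - k)); rewrite mulrACA mulVr // mul1r -exprD subnK.
by right; exists (u * pi ^+ (k - r.+1)); rewrite -mulrA -exprD subnK.
Qed.

Lemma nonunit_pdvd a : a \notin GRing.unit -> pdvd pi a.
Proof.
move=> au; have [_ _ factor] := pi_unif.
have [->|a0] := eqVneq a 0; first exact: pdvd0.
have [u [[|k] [uu Ea]]] := factor a a0; first by rewrite Ea expr0 mulr1 uu in au.
by exists (u * pi ^+ k); rewrite Ea exprSr mulrA.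
Qed.

Lemma pdvd_min (I : finType) (i0 : I) (F : I -> R) :
  exists k, forall l, pdvd (F k) (F l).
Proof.
suff [s0|[k Fk]] : enum I = [::] \/ exists k, forall l, l \in enum I -> pdvd (F k) (F l).
- by have := mem_enum I i0; rewrite s0.
- by exists k => l; apply/Fk; rewrite mem_enum.
elim: (enum I) => [|i s [->|[k Fk]]]; [by left | right | right].
  by exists i => l; rewrite inE => /eqP ->; apply: pdvdnn.
have [ki|ik] := pdvd_total (F k) (F i).
  by exists k => l; rewrite inE => /orP [/eqP ->|/Fk].
exists i => l; rewrite inE => /orP [/eqP ->|/Fk]; [exact: pdvdnn | exact: pdvd_trans].
Qed.

Lemma dvr_smith N (A : 'M[R]_N) :
  exists P (d : 'rV[R]_N) Q, [/\ P \in unitmx, Q \in unitmx & A = P *m diag_mx d *m Q].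
Proof.
elim: N A => [|N IH] A.
  by exists 1%:M, 0, 1%:M; rewrite unitmx1; split=> //; apply/matrixP => [[]].
have [[i j] /= min_ij] := pdvd_min (0, 0) (fun ij : 'I_N.+1 * 'I_N.+1 => A ij.1 ij.2).
pose A1 : 'M[R]_(1 + N) := xrow 0 i (xcol 0 j A).
have EA : A = tperm_mx 0 i *m A1 *m tperm_mx 0 j.
  have tpermK_mx n (k l : 'I_n) : tperm_mx k l *m tperm_mx k l = 1%:M.
    by rewrite -perm_mxM tperm2 perm_mx1.
  by rewrite /A1 xrowE xcolE !mulmxA tpermK_mx mul1mx -mulmxA tpermK_mx mulmx1.
have [|L [U [A' [uL uU EA1]]]] := @pivot_block _ _ A1.
  by move=> k l; rewrite !mxE !tpermL; apply: (min_ij (_, _)).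
have [P' [d' [Q' [uP' uQ' EA']]]] := IH A'.
exists (tperm_mx 0 i *m L *m block_mx 1 0 0 P'), (row_mx (A1 0 0)%:M d'),
  (block_mx 1 0 0 Q' *m U *m tperm_mx 0 j).
split.
- by rewrite !unitmx_mul unitmx_perm uL unitmxE (@det_ublock _ 1 N) det1 mul1r -unitmxE uP'.
- by rewrite !unitmx_mul unitmx_perm uU unitmxE (@det_ublock _ 1 N) det1 mul1r -unitmxE uQ'.
rewrite EA {1}EA1 EA' (@diag_mx_row _ N 1) !mulmxA; congr (_ *m _ *m _).
rewrite -!mulmxA; congr (_ *m (_ *m _)); rewrite !(@mulmx_block _ 1 N 1 N 1 N).
rewrite !mulmx0 !mul0mx !mulmx1 !mul1mx !addr0 !add0r !mulmxA.
congr block_mx; last by rewrite mulmx0.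
by apply/matrixP => k l; rewrite !ord1 !mxE eqxx !mulr1n.
Qed.

Lemma nondeg_unitmx N (G : 'M[R]_N) :
  (forall v : 'rV[R]_N, mxdvd pi (v *m G) -> mxdvd pi v) -> G \in unitmx.
Proof.
move=> nondeg; have [P [d [Q [uP uQ EG]]]] := dvr_smith G.
suff ud i : d 0 i \is a GRing.unit.
  by rewrite EG !unitmx_mul uP uQ andbT unitmxE det_diag unitr_prod.
apply/negPn/negP => /nonunit_pdvd[c Ed].
have : mxdvd pi ((delta_mx 0 i : 'rV_N) *m invmx P).
  apply: nondeg; rewrite EG !mulmxA mulmxKV // -rowE row_diag_mx Ed mulrC -scalerA.
  by apply/mxdvdMr; apply: mxdvd_scale.
move/(mxdvdMr P); rewrite mulmxKV // => /(_ 0 i); rewrite mxE !eqxx => /pdvd1_unit.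
by have [_ /negP] := pi_unif.
Qed.

Lemma ker_shadow N (A : 'M[R]_N) (v : 'rV[R]_N) r :
  (forall u w : 'rV[R]_N, mxdvd (pi ^+ r.+1) (pi ^+ r *: w - u *m A) ->
     pdvd pi ((v *m w^T) 0 0)) ->
  exists2 v', mxdvd pi (v' - v) & mxdvd (pi ^+ r.+1) (v' *m A^T).
Proof.
(* With A = P diag(d) Q, the hypothesis makes the coordinates of v Q^T with
   d_i | pi^r divisible by pi; zeroing them gives v', as every other d_i is
   divisible by pi^(r+1). *)
move=> orth; have [P [d [Q [uP uQ EA]]]] := dvr_smith A.
pose g := v *m Q^T.
have g_small i : pdvd (d 0 i) (pi ^+ r) -> pdvd pi (g 0 i).
  case=> c Ec; have := orth (c *: (delta_mx 0 i : 'rV_N) *m invmx P) (delta_mx 0 i *m Q).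
  rewrite trmx_mul trmx_delta mulmxA -colE mxE; apply.
  rewrite EA !mulmxA mulmxKV // -!scalemxAl -(rowE i (diag_mx d)) row_diag_mx.
  by rewrite -scalemxAl scalerA -Ec subrr; apply: mxdvd0.
have [g' Eg'] : exists g' : 'rV[R]_N, forall i,
    pdvd pi (g' 0 i - g 0 i) /\ pdvd (pi ^+ r.+1) (g' 0 i * d 0 i).
  suff /fin_all_exists[f Ef] : forall i, exists x,
      pdvd pi (x - g 0 i) /\ pdvd (pi ^+ r.+1) (x * d 0 i).
    by exists (\row_i f i) => i; rewrite mxE.
  move=> i; have [/g_small gi|dd] := pdvd_exp_or_exp_pdvd (d 0 i) r.
    by exists 0; rewrite sub0r mul0r; split; [apply: pdvdN | apply: pdvd0].
  by exists (g 0 i); rewrite subrr; split; [apply: pdvd0 | apply: pdvd_mull].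
exists (g' *m invmx Q^T).
  have -> : v = g *m invmx Q^T by rewrite mulmxK // unitmx_tr.
  by rewrite -mulmxBl; apply: mxdvdMr => k i; have := (Eg' i).1; rewrite [k]ord1 !mxE.
rewrite EA !trmx_mul tr_diag_mx !mulmxA mulmxKV ?unitmx_tr //.
by apply: mxdvdMr => k i; rewrite [k]ord1 mul_mx_diag mxE; apply: (Eg' i).2.
Qed.

Lemma skew_ker_shadow N (G A : 'M[R]_N) (t : 'rV[R]_N) r :
  G \in unitmx -> A *m G = - (G *m A^T) ->
  (forall u w : 'rV[R]_N, mxdvd (pi ^+ r.+1) (pi ^+ r *: w - u *m A) ->
     pdvd pi ((t *m G *m w^T) 0 0)) ->
  exists2 s, mxdvd pi (s - t) & mxdvd (pi ^+ r.+1) (s *m A).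
Proof.
move=> uG skewA /ker_shadow[v' v'_t v'A]; exists (v' *m invmx G).
  by rewrite -[t](mulmxK uG) -mulmxBl; apply: mxdvdMr.
have skewA' : invmx G *m A = - (A^T *m invmx G).
  rewrite -[LHS](mulmxK uG) -(mulmxA (invmx G) A) skewA mulmxN mulNmx.
  by rewrite mulmxA (mulVmx uG) mul1mx.
rewrite -mulmxA skewA' mulmxN mulmxA.
by apply/mxdvdN/mxdvdMr.
Qed.

End DiscreteValuationRing.

Section LieBracket.
Variables (R : comNzRingType) (n : nat).
Implicit Types A B C : 'M[R]_n.

Lemma lie_is_linear A : linear (lie A).
Proof.
by move=> a B C; rewrite /lie mulmxDr mulmxDl scalerBr -scalemxAr -scalemxAl addrACA opprD.
Qed.

HB.instance Definition _ A := GRing.isLinear.Build R _ _ _ (lie A) (lie_is_linear A).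

Lemma lie_anti A B : lie B A = - lie A B.
Proof. by rewrite /lie opprB. Qed.

Lemma lieBr A B C : lie A (B - C) = lie A B - lie A C.
Proof. exact: linearB. Qed.

Lemma lieDl A B C : lie (A + B) C = lie A C + lie B C.
Proof. by rewrite /lie mulmxDl mulmxDr addrACA opprD. Qed.

Lemma lieNl A B : lie (- A) B = - lie A B.
Proof. by rewrite /lie mulNmx mulmxN opprK opprB addrC. Qed.

Lemma lieBl A B C : lie (A - B) C = lie A C - lie B C.
Proof. by rewrite lieDl lieNl. Qed.

Lemma lieZl a A B : lie (a *: A) B = a *: lie A B.
Proof. by rewrite /lie scalerBr scalemxAl scalemxAr. Qed.

Lemma in_sl0 : in_sl (0 : 'M[R]_n).
Proof. exact: mxtrace0. Qed.

Lemma in_slD A B : in_sl A -> in_sl B -> in_sl (A + B).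
Proof. by rewrite /in_sl mxtraceD => -> ->; rewrite addr0. Qed.

Lemma in_slN A : in_sl A -> in_sl (- A).
Proof. by rewrite /in_sl -scaleN1r mxtraceZ => ->; rewrite mulr0. Qed.

Lemma in_slB A B : in_sl A -> in_sl B -> in_sl (A - B).
Proof. by move=> sA sB; apply/in_slD/in_slN. Qed.

Lemma in_slZ a A : in_sl A -> in_sl (a *: A).
Proof. by rewrite /in_sl mxtraceZ => ->; rewrite mulr0. Qed.

Lemma in_sl_lie A B : in_sl (lie A B).
Proof. by rewrite /in_sl /lie linearB /= mxtrace_mulC subrr. Qed.

End LieBracket.

Arguments in_sl0 {R n}.

Lemma in_slZ_inv (R : idomainType) n (c : R) (A : 'M[R]_n) :
  c != 0 -> in_sl (c *: A) -> in_sl A.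
Proof. by move=> c0; rewrite /in_sl mxtraceZ => /eqP; rewrite mulf_eq0 (negPf c0) => /eqP. Qed.

Create HintDb in_sl.
#[local] Hint Resolve in_sl0 in_slD in_slB in_slZ in_sl_lie : in_sl.
#[local] Hint Extern 0 (in_sl _) => solve [auto with in_sl nocore] : core.

Section LieDivisibility.
Variables (R : comNzRingType) (n : nat) (d : R).
Implicit Types A B : 'M[R]_n.

Lemma mxdvd_liel A B : mxdvd d A -> mxdvd d (lie A B).
Proof. by move=> dA; apply: mxdvdB; [apply: mxdvdMr | apply: mxdvdMl]. Qed.

Lemma mxdvd_lier A B : mxdvd d B -> mxdvd d (lie A B).
Proof. by move=> dB; apply: mxdvdB; [apply: mxdvdMl | apply: mxdvdMr]. Qed.

Lemma mxdvd_lieB A A' B B' :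
  mxdvd d (A - A') -> mxdvd d (B - B') -> mxdvd d (lie A B - lie A' B').
Proof.
have -> : lie A B - lie A' B' = lie (A - A') B + lie A' (B - B').
  by rewrite lieBl lieBr addrA subrK.
by move=> dA dB; apply: mxdvdD; [apply: mxdvd_liel | apply: mxdvd_lier].
Qed.

End LieDivisibility.

Section Shadow.
Variables (R : comNzRingType) (n : nat) (pi : R) (r : nat).
Implicit Types a y z : 'M[R]_n.

Lemma centr_shadow a y : centr pi r a y -> shadow pi r a y.
Proof. by exists y; split=> // i j; rewrite subrr mxE; apply: pdvd0. Qed.

Lemma shadow_cong a y z : mxcong pi y z -> shadow pi r a z -> shadow pi r a y.
Proof.
move=> yz [w [aw zw]]; exists w; split=> //.
have : mxdvd pi ((y - z) + (z - w)) by apply: mxdvdD.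
by rewrite addrA subrK.
Qed.

End Shadow.

Section InvariantForm.
Variables (R : idomainType) (n : nat) (pi : R) (kappa : 'M[R]_n -> 'M[R]_n -> R).
Hypothesis kappa_good : good_form pi kappa.
Implicit Types X Y Z : 'M[R]_n.

Lemma kappaC X Y : in_sl X -> in_sl Y -> kappa X Y = kappa Y X.
Proof. by have [_ _ kC _ _] := kappa_good; apply: kC. Qed.

Lemma kappa_lie X Y Z : in_sl X -> in_sl Y -> in_sl Z ->
  kappa (lie X Y) Z = kappa X (lie Y Z).
Proof. by have [_ _ _ kI _] := kappa_good; apply: kI. Qed.

Lemma kappa0l Z : in_sl Z -> kappa 0 Z = 0.
Proof.
have [kL _ _ _ _] := kappa_good => sZ.
by have := kL (-1) 0 0 Z in_sl0 in_sl0 sZ; rewrite scaleN1r oppr0 addr0 mulN1r addNr.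
Qed.

Lemma kappa0r Z : in_sl Z -> kappa Z 0 = 0.
Proof.
have [_ kR _ _ _] := kappa_good => sZ.
by have := kR (-1) Z 0 0 sZ in_sl0 in_sl0; rewrite scaleN1r oppr0 addr0 mulN1r addNr.
Qed.

Lemma kappaZl a X Z : in_sl X -> in_sl Z -> kappa (a *: X) Z = a * kappa X Z.
Proof.
have [kL _ _ _ _] := kappa_good => sX sZ.
by rewrite -[a *: X]addr0 kL // kappa0l // addr0.
Qed.

Lemma kappaZr a X Z : in_sl X -> in_sl Z -> kappa Z (a *: X) = a * kappa Z X.
Proof.
have [_ kR _ _ _] := kappa_good => sX sZ.
by rewrite -[a *: X]addr0 kR // kappa0r // addr0.
Qed.

Lemma kappaNl X Z : in_sl X -> in_sl Z -> kappa (- X) Z = - kappa X Z.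
Proof. by move=> sX sZ; rewrite -scaleN1r kappaZl // mulN1r. Qed.

Lemma kappaBl X Y Z : in_sl X -> in_sl Y -> in_sl Z ->
  kappa (X - Y) Z = kappa X Z - kappa Y Z.
Proof.
have [kL _ _ _ _] := kappa_good => sX sY sZ.
by rewrite addrC -scaleN1r kL // mulN1r addrC.
Qed.

Lemma kappaDr X Y Z : in_sl X -> in_sl Y -> in_sl Z ->
  kappa Z (X + Y) = kappa Z X + kappa Z Y.
Proof.
have [_ kR _ _ _] := kappa_good => sX sY sZ.
by have := kR 1 Z X Y sZ sX sY; rewrite scale1r mul1r.
Qed.

Lemma kappaBr X Y Z : in_sl X -> in_sl Y -> in_sl Z ->
  kappa Z (X - Y) = kappa Z X - kappa Z Y.
Proof.
have [_ kR _ _ _] := kappa_good => sX sY sZ.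
by rewrite addrC -scaleN1r kR // mulN1r addrC.
Qed.

Lemma kappa_lie_swap X Y Z : in_sl X -> in_sl Y -> in_sl Z ->
  kappa X (lie Y Z) = - kappa Y (lie X Z).
Proof.
move=> sX sY sZ; rewrite -kappa_lie // lie_anti.
by rewrite -scaleN1r kappaZl // mulN1r kappa_lie.
Qed.

Lemma kappa_dvdl d X Z : in_sl X -> in_sl Z -> mxdvd d X -> pdvd d (kappa X Z).
Proof.
move=> sX sZ; have [->|d0] := eqVneq d 0 => /mxdvdP[D EX].
  by rewrite EX scale0r kappa0l //; apply: pdvd0.
have sD : in_sl D by apply: (in_slZ_inv d0); rewrite -EX.
by rewrite EX kappaZl // mulrC; exists (kappa D Z).
Qed.

Lemma kappa_dvdr d X Z : in_sl X -> in_sl Z -> mxdvd d X -> pdvd d (kappa Z X).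
Proof. by move=> sX sZ dX; rewrite kappaC //; apply: kappa_dvdl. Qed.

Lemma kappa_congl d X X' Z : in_sl X -> in_sl X' -> in_sl Z ->
  mxdvd d (X - X') -> pdvd d (kappa X Z - kappa X' Z).
Proof. by move=> sX sX' sZ dX; rewrite -kappaBl //; apply: kappa_dvdl. Qed.

Lemma kappa_congr d X X' Z : in_sl X -> in_sl X' -> in_sl Z ->
  mxdvd d (X - X') -> pdvd d (kappa Z X - kappa Z X').
Proof. by move=> sX sX' sZ dX; rewrite -kappaBr //; apply: kappa_dvdr. Qed.

Lemma kappa_lie_centr k a Y V : in_sl a -> in_sl V -> centr pi k a Y ->
  pdvd (pi ^+ k) (kappa Y (lie a V)).
Proof.
move=> sa sV [sY aY]; rewrite -kappa_lie //; apply: kappa_dvdl => //.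
by rewrite lie_anti -[lie a Y]subr0; apply: mxdvdN.
Qed.

Section Lift.
Variables (r : nat) (e b xc : 'M[R]_n).
Hypotheses (pi_neq0 : pi != 0) (sl_b : in_sl b) (sl_xc : in_sl xc).
Hypothesis b_lifts_e : mxcong (pi ^+ r) b e.
Hypothesis shadow_e_b : forall z, shadow pi r e z -> shadow pi r.+1 b z.
Local Notation x := (b + pi ^+ r *: xc).

Let pir_neq0 : pi ^+ r != 0. Proof. exact: expf_neq0. Qed.

Lemma centr_e_of_lie_x V : in_sl V -> mxdvd (pi ^+ r) (lie x V) -> centr pi r e V.
Proof.
move=> sV xV; split=> //; apply/mxcong0.
have xe : mxdvd (pi ^+ r) (x - e) by rewrite addrAC; apply: mxdvdD => //; apply: mxdvd_scale.
by rewrite -[lie e V](subKr (lie x V)) -lieBl; apply: mxdvdB => //; apply: mxdvd_liel.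
Qed.

Lemma shadow_sub_stab y : shadow pi r.+1 x y -> stab_sh pi kappa r e xc y.
Proof.
case=> Y [[sY /mxcong0 xY] yY].
split.
  apply: (shadow_cong yY); apply/centr_shadow/centr_e_of_lie_x => //.
  exact: mxdvd_trans (pdvd_exp2l _ (leqnSn r)) xY.
move=> z /shadow_e_b[Z [bZ zZ]]; have [sZ _] := bZ.
apply: (pdvd_subK (b := kappa xc (lie Y Z))).
  by apply: kappa_congr => //; apply: mxdvd_lieB.
apply/(pdvd_pmul2l _ _ pir_neq0); rewrite -exprSr -kappaZl // -kappa_lie //.
have -> : lie (pi ^+ r *: xc) Y = lie x Y - lie b Y by rewrite lieDl addrC addKr.
rewrite kappaBl //; apply: pdvdB; first exact: kappa_dvdl.
by rewrite kappaC //; apply: kappa_lie_centr.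
Qed.

Lemma shadow_orth_quot y0 V D : shadow pi r e y0 -> in_sl y0 -> in_sl V -> in_sl D ->
  lie b V = pi ^+ r *: D -> pdvd pi (kappa y0 D).
Proof.
move=> /shadow_e_b[Y [bY y0Y]] sy0 sV sD ED; have [sY _] := bY.
apply: (pdvd_subK (b := kappa Y D)); first exact: kappa_congl.
apply/(pdvd_pmul2l _ _ pir_neq0); rewrite -exprSr -kappaZr // -ED.
exact: kappa_lie_centr.
Qed.

Lemma stab_orth y y0 V W : centr pi r e y0 -> mxcong pi y y0 ->
  (forall z, shadow pi r e z -> pdvd pi (kappa xc (lie y z))) ->
  in_sl V -> in_sl W -> mxdvd (pi ^+ r.+1) (pi ^+ r *: W - lie x V) ->
  pdvd pi (kappa y0 W).
Proof.
move=> ey0 yy0 stab_y sV sW xVW; have [sy0 _] := ey0.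
have xV : mxdvd (pi ^+ r) (lie x V).
  rewrite -[lie x V](subKr (pi ^+ r *: W)); apply: mxdvdB; first exact: mxdvd_scale.
  exact: mxdvd_trans (pdvd_exp2l _ (leqnSn r)) xVW.
have [D ED] : exists D, lie b V = pi ^+ r *: D.
  apply/mxdvdP; rewrite -[b](addrK (pi ^+ r *: xc)) lieBl lieZl.
  by apply: mxdvdB => //; apply: mxdvd_scale.
have sD : in_sl D by apply: (in_slZ_inv pir_neq0); rewrite -ED.
have WD : mxdvd pi (W - (D + lie xc V)).
  by apply/(mxdvd_pmul2l _ _ pir_neq0); rewrite -exprSr scalerBr scalerDr -ED -lieZl -lieDl.
apply: (pdvd_subK (b := kappa y0 (D + lie xc V))); first exact: kappa_congr.
rewrite kappaDr //; apply: pdvdD; first exact: shadow_orth_quot (centr_shadow ey0) _ _ _ ED.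
rewrite kappa_lie_swap //; apply: pdvdN.
have sh_V : shadow pi r e V by apply/centr_shadow/centr_e_of_lie_x.
apply: (pdvd_subK (b := kappa xc (lie y V))); last exact: stab_y.
rewrite -kappaBr // -lieBl; apply: kappa_dvdr => //.
by apply: mxdvd_liel; rewrite -opprB; apply: mxdvdN.
Qed.

End Lift.

End InvariantForm.

Lemma form_gramE (R : comNzRingType) N (f : 'rV[R]_N -> 'rV[R]_N -> R) :
  (forall a u v w, f (a *: u + v) w = a * f u w + f v w) ->
  (forall a u v w, f w (a *: u + v) = a * f w u + f w v) ->
  forall u w, f u w = (u *m \matrix_(k, l) f (delta_mx 0 k) (delta_mx 0 l) *m w^T) 0 0.
Proof.
move=> fl fr u w.
have f_suml w' (c : 'I_N -> R) :
    f (\sum_k c k *: delta_mx 0 k) w' = \sum_k c k * f (delta_mx 0 k) w'.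
  elim/big_rec2: _ => [|k a v _ <-]; last by rewrite fl.
  by have := fl (-1) 0 0 w'; rewrite scaleN1r oppr0 addr0 mulN1r addNr.
have f_sumr u' (c : 'I_N -> R) :
    f u' (\sum_k c k *: delta_mx 0 k) = \sum_k c k * f u' (delta_mx 0 k).
  elim/big_rec2: _ => [|k a v _ <-]; last by rewrite fr.
  by have := fr (-1) 0 0 u'; rewrite scaleN1r oppr0 addr0 mulN1r addNr.
rewrite {1}(row_sum_delta u) f_suml mxE.
under eq_bigr => k _ do rewrite {1}(row_sum_delta w) f_sumr mulr_sumr.
rewrite exchange_big; apply: eq_bigr => l _; rewrite !mxE mulr_suml.
by apply: eq_bigr => k _; rewrite !mxE [w 0 l * _]mulrC mulrA.
Qed.

(* sl_n is not a coordinate space, so kappa is extended to the form [glform]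
   on gl_n = sl_n + o E_00 via the linear retraction [slproj]. *)
Definition slproj (R : comNzRingType) n (X : 'M[R]_n.+1) : 'M[R]_n.+1 :=
  X - \tr X *: delta_mx 0 0.

Section SlProjection.
Variables (R : comNzRingType) (n : nat).
Implicit Types X : 'M[R]_n.+1.

Lemma slproj_is_linear : linear (@slproj R n).
Proof.
by move=> a X Y; rewrite /slproj linearP /= scalerDl -scalerA scalerBr opprD addrACA.
Qed.

HB.instance Definition _ := GRing.isLinear.Build R _ _ _ (@slproj R n) slproj_is_linear.

Lemma mxtrace_delta00 : \tr (delta_mx 0 0 : 'M[R]_n.+1) = 1.
Proof.
rewrite /mxtrace (bigD1 0) //= mxE eqxx big1 ?addr0 // => i /negPf ne_i0.
by rewrite mxE ne_i0.
Qed.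

Lemma in_sl_slproj X : in_sl (slproj X).
Proof. by rewrite /in_sl /slproj linearB /= mxtraceZ mxtrace_delta00 mulr1 subrr. Qed.

Lemma slproj_id X : in_sl X -> slproj X = X.
Proof. by rewrite /slproj => ->; rewrite scale0r subr0. Qed.

Lemma mxdvd_slproj d X : pdvd d (\tr X) -> mxdvd d (X - slproj X).
Proof. by rewrite /slproj subKr => dX; apply: mxdvdZl. Qed.

Lemma mxdvd_subr_slproj d Y X : in_sl Y -> mxdvd d (Y - X) -> mxdvd d (Y - slproj X).
Proof.
move=> sY YX; have trX : pdvd d (\tr X).
  by have := mxdvd_tr YX; rewrite linearB /= sY sub0r => /pdvdN; rewrite opprK.
have : mxdvd d ((Y - X) + (X - slproj X)) by apply: mxdvdD => //; apply: mxdvd_slproj.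
by rewrite addrA subrK.
Qed.

End SlProjection.

#[local] Hint Resolve in_sl_slproj : in_sl.

Lemma mxdvd_slproj_lift (R : idomainType) n (c d : R) (W L : 'M[R]_n.+1) :
  c != 0 -> in_sl L -> mxdvd (c * d) (c *: W - L) -> mxdvd (c * d) (c *: slproj W - L).
Proof.
move=> c0 sL WL; have trW : pdvd d (\tr W).
  by have := mxdvd_tr WL; rewrite linearB /= mxtraceZ sL subr0 => /(pdvd_pmul2l _ _ c0).
rewrite -[c *: slproj W](subKr (c *: W)) -scalerBr addrAC.
by apply: mxdvdB => //; apply/(mxdvd_pmul2l _ _ c0)/mxdvd_slproj.
Qed.

Section GlExtension.
Variables (R : idomainType) (n : nat) (pi : R) (kappa : 'M[R]_n.+1 -> 'M[R]_n.+1 -> R).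
Hypotheses (pi_unif : is_DVR_unif pi) (kappa_good : good_form pi kappa).
Implicit Types X Y Z : 'M[R]_n.+1.

Definition glform X Y := kappa (slproj X) (slproj Y) + \tr X * \tr Y.

Lemma glform_linl a X Y Z : glform (a *: X + Y) Z = a * glform X Z + glform Y Z.
Proof.
have [kL _ _ _ _] := kappa_good.
by rewrite /glform linearP /= kL // mxtraceD mxtraceZ mulrDl -mulrA addrACA -mulrDr.
Qed.

Lemma glform_linr a X Y Z : glform Z (a *: X + Y) = a * glform Z X + glform Z Y.
Proof.
have [_ kR _ _ _] := kappa_good.
by rewrite /glform linearP /= kR // mxtraceD mxtraceZ mulrDr mulrCA addrACA -mulrDr.
Qed.

Lemma glform_sl X Y : in_sl X -> glform X Y = kappa X (slproj Y).
Proof. by move=> sX; rewrite /glform slproj_id // sX mul0r addr0. Qed.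

Lemma glform_skew x X Y : in_sl x ->
  glform (lie x (slproj X)) Y = - glform X (lie x (slproj Y)).
Proof.
move=> sx; rewrite glform_sl // /glform [slproj (lie _ _)]slproj_id //.
rewrite (in_sl_lie x) mulr0 addr0.
by rewrite lie_anti (kappaNl kappa_good) ?(kappa_lie kappa_good).
Qed.

Definition gram : 'M[R]_(n.+1 * n.+1) :=
  \matrix_(k, l) glform (vec_mx (delta_mx 0 k)) (vec_mx (delta_mx 0 l)).

Lemma gramE u w : (u *m gram *m w^T) 0 0 = glform (vec_mx u) (vec_mx w).
Proof.
symmetry; apply: (form_gramE (f := fun u w => glform (vec_mx u) (vec_mx w))).
  by move=> a u' v w'; rewrite linearP glform_linl.
by move=> a u' v w'; rewrite linearP glform_linr.
Qed.

Lemma gram_unitmx : gram \in unitmx.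
Proof.
apply: (nondeg_unitmx pi_unif) => v vG; have [_ _ _ _ nondeg] := kappa_good.
set V := vec_mx v; have glV Y : pdvd pi (glform V Y).
  by rewrite -[Y]mxvecK -gramE; apply: (mxdvdMr _ vG).
have trV : pdvd pi (\tr V).
  have := glV (delta_mx 0 0); rewrite /glform [slproj (delta_mx 0 0)]/slproj.
  by rewrite mxtrace_delta00 scale1r subrr (kappa0r kappa_good) // add0r mulr1.
have pV : mxdvd pi (slproj V).
  apply: nondeg => [|Y sY]; first exact: in_sl_slproj.
  by have := glV Y; rewrite /glform [slproj Y]slproj_id // sY mulr0 addr0.
rewrite -[v]vec_mxK; apply/mxdvd_mxvec; rewrite -/V -[V](subrK (slproj V)).
by apply: mxdvdD => //; apply: mxdvd_slproj.
Qed.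

Lemma ad_gram_skew x : in_sl x ->
  lin_mx (lie x \o @slproj R n) *m gram = - (gram *m (lin_mx (lie x \o @slproj R n))^T).
Proof.
move=> sx; apply/matrixP => k l.
have entry (M : 'M[R]_(n.+1 * n.+1)) :
    M k l = ((delta_mx 0 k : 'rV_(n.+1 * n.+1)) *m M *m (delta_mx 0 l : 'rV__)^T) 0 0.
  by rewrite -rowE trmx_delta -colE !mxE.
rewrite [RHS]mxE !entry !mulmxA gramE -mulmxA -trmx_mul gramE !mx_rV_lin /=.
exact: glform_skew.
Qed.

Lemma shadow_of_orth r x y : in_sl x -> in_sl y ->
  (forall V W, in_sl V -> in_sl W ->
     mxdvd (pi ^+ r.+1) (pi ^+ r *: W - lie x V) -> pdvd pi (kappa y W)) ->
  shadow pi r.+1 x y.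
Proof.
move=> sx sy orth; pose T := lie x \o @slproj R n.
have pir_neq0 : pi ^+ r != 0 by have [pi_neq0 _ _] := pi_unif; apply: expf_neq0.
have [s s_y sT] : exists2 s, mxdvd pi (s - mxvec y) & mxdvd (pi ^+ r.+1) (s *m lin_mx T).
  apply: (skew_ker_shadow pi_unif gram_unitmx (ad_gram_skew sx)) => u w.
  rewrite mul_rV_lin /= -[w]vec_mxK -linearZ -linearB => /mxdvd_mxvec xVW.
  rewrite gramE !mxvecK glform_sl //; apply: (orth (slproj (vec_mx u))) => //.
  by move: xVW; rewrite exprSr; apply: mxdvd_slproj_lift.
exists (slproj (vec_mx s)); split.
  by split=> //; apply/mxcong0/mxdvd_mxvec; move: sT; rewrite mul_rV_lin.
apply: mxdvd_subr_slproj => //.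
by rewrite -opprB; apply/mxdvdN/mxdvd_mxvec; rewrite linearB /= vec_mxK.
Qed.

End GlExtension.

Theorem mainTheorem2 (o : idomainType) (pi : o) (n : nat)
  (kappa : 'M[o]_n -> 'M[o]_n -> o) (r : nat) (e b xc : 'M[o]_n) :
  is_DVR_unif pi -> compact_DVR pi -> good_form pi kappa ->
  (0 < r)%N ->
  in_sl e -> in_sl b -> in_sl xc ->
  (* b is a lift of e *)
  mxcong (pi ^+ r) b e ->
  (* b is shadow-preserving *)
  (forall z, shadow pi r.+1 b z <-> shadow pi r e z) ->
  forall y, stab_sh pi kappa r e xc y <-> shadow pi r.+1 (b + pi ^+ r *: xc) y.
Proof.
move=> pi_unif _ kappa_good _ _ sl_b sl_xc b_lifts_e b_shadow y.
have [pi_neq0 _ _] := pi_unif.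
have {b_shadow} shadow_e_b z : shadow pi r e z -> shadow pi r.+1 b z by move/b_shadow.
split; last exact: shadow_sub_stab.
case=> -[y0 [e_y0 y_y0]] stab_y; have [sl_y0 _] := e_y0; apply: (shadow_cong y_y0).
case: n => [|n] in kappa kappa_good e b xc y y0 sl_b sl_xc b_lifts_e shadow_e_b
  e_y0 y_y0 stab_y sl_y0 *.
  by apply: centr_shadow; split=> // [[]].
apply: (shadow_of_orth pi_unif kappa_good) => // V W sV sW xVW.
exact: stab_orth xVW.
Qed.
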